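(* (1) Let $C$ be a binary Euclidean LCD $[n,k]$ code with generator matrix $G$, let $\mathbf{y}\in C^{\perp_E}$, and let $C'$ be the binary code with generator matrix $G'=\begin{pmatrix}\mathbf{y}\\ G\end{pmatrix}$. If $wt(\mathbf{y})$ is odd, then $C'$ is a binary Euclidean LCD $[n,k+1]$ code. (2) Let $C$ be a ternary Euclidean LCD $[n,k]$ code with generator matrix $G$, let $\mathbf{y}\in C^{\perp_E}$, and let $C'$ be the ternary code with generator matrix $G'=\begin{pmatrix}\mathbf{y}\\ G\end{pmatrix}$. If $wt(\mathbf{y})\not\equiv 0\pmod 3$, then $C'$ is a ternary Euclidean LCD $[n,k+1]$ code. (3) Let $C$ be a quaternary Hermitian LCD $[n,k]$ code with generator matrix $G$, let $\mathbf{y}\in C^{\perp_H}$, and let $C'$ be the quaternary code with generator matrix $G'=\begin{pmatrix}\mathbf{y}\\ G\end{pmatrix}$. If $wt(\mathbf{y})$ is odd, then $C'$ is a quaternary Hermitian LCD $[n,k+1]$ code.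
   Context: Binary, ternary, quaternary codes are linear codes over $\mathbb{F}_2,\mathbb{F}_3,\mathbb{F}_4$. An $[n,k]$ code is a $k$-dimensional subspace of $\mathbb{F}_q^n$; a generator matrix has rows forming a basis. $wt$ is the Hamming weight. Euclidean inner product $\langle x,y\rangle_E=\sum x_iy_i$ with dual $C^{\perp_E}$; on $\mathbb{F}_4^n$ the Hermitian inner product is $\langle x,y\rangle_H=\sum x_iy_i^2$ with dual $C^{\perp_H}$. A code is (Euclidean/Hermitian) LCD if $C\cap C^{\perp}=\{0\}$. *)

From HB Require Import structures.
From mathcomp Require Import all_boot all_order all_algebra all_field.
Set Implicit Arguments. Unset Strict Implicit. Unset Printing Implicit Defensive.
Import GRing.Theory.
Local Open Scope ring_scope.

(* Linear codes over a field F: an [n,k] code C is given by a generator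
   matrix G : 'M[F]_(k,n) whose rows form a basis of C (row_free G);
   C is the row space of G. *)
Section Codes.
Variable F : fieldType.

Definition ipE n (x y : 'rV[F]_n) : F := \sum_(i < n) x 0 i * y 0 i.
(* Hermitian inner product <x,y>_H = sum x_i y_i^2 (meaningful over F_4) *)
Definition ipH n (x y : 'rV[F]_n) : F := \sum_(i < n) x 0 i * (y 0 i) ^+ 2.

Definition wt n (x : 'rV[F]_n) : nat := #|[set i : 'I_n | x 0 i != 0]|.

Definition is_gen_matrix k n (G : 'M[F]_(k, n)) : Prop := row_free G.

Definition in_code k n (G : 'M[F]_(k, n)) (x : 'rV[F]_n) : bool := (x <= G)%MS.

Definition in_dualE k n (G : 'M[F]_(k, n)) (y : 'rV[F]_n) : Prop :=
  forall x, in_code G x -> ipE x y = 0.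
Definition in_dualH k n (G : 'M[F]_(k, n)) (y : 'rV[F]_n) : Prop :=
  forall x, in_code G x -> ipH x y = 0.

Definition LCD_E k n (G : 'M[F]_(k, n)) : Prop :=
  forall x, in_code G x -> in_dualE G x -> x = 0.
Definition LCD_H k n (G : 'M[F]_(k, n)) : Prop :=
  forall x, in_code G x -> in_dualH G x -> x = 0.

End Codes.

From HB Require Import structures.
From mathcomp Require Import all_boot all_order all_algebra all_field.
Set Implicit Arguments. Unset Strict Implicit. Unset Printing Implicit Defensive.
Import GRing.Theory.
Local Open Scope ring_scope.

(* All three parts are one fact about a form [f] that is additive and
   [s]-semilinear in its second argument with [s a = 0 -> a = 0]
   ([s = id] for the Euclidean product, [s a = a^2] for the Hermitian one in
   characteristic 2).  If [y] is orthogonal to the LCD code [C] and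
   [f y y <> 0], then [y] is not in [C], so the dimension goes up; and if
   [a y + c] (with [c] in [C]) is orthogonal to the new code, then [c] is
   orthogonal to [C], hence [c = 0], and [s a * f y y = 0] forces [a = 0].
   Over a field with [q] elements [x^(q-1)] is [1] or [0] according as [x]
   is nonzero or not, so [<y,y>_E] over [F_2], [F_3] and [<y,y>_H] over [F_4]
   are [wt y] read in the field, nonzero under the weight hypotheses. *)

Section ColMx.
Variables (F : fieldType) (m1 m2 n : nat) (A : 'M[F]_(m1, n)) (B : 'M[F]_(m2, n)).

Lemma submx_col_mxl : (A <= col_mx A B)%MS.
Proof. by rewrite -addsmxE addsmxSl. Qed.

Lemma submx_col_mxr : (B <= col_mx A B)%MS.
Proof. by rewrite -addsmxE addsmxSr. Qed.

End ColMx.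

Section ColMxRowVector.
Variables (F : fieldType) (n k : nat) (y : 'rV[F]_n) (G : 'M[F]_(k, n)).

Lemma sub_col_mx_rV (x : 'rV[F]_n) :
  (x <= col_mx y G)%MS -> exists a c, (c <= G)%MS /\ x = a *: y + c.
Proof.
rewrite -addsmxE => /sub_addsmxP[[u v] /= ->].
exists (u 0 0), (v *m G); split; first exact: submxMl.
by rewrite {1}[u]mx11_scalar mul_scalar_mx.
Qed.

Lemma row_free_col_mx_rV :
  row_free G -> ~~ (y <= G)%MS -> row_free (col_mx y G).
Proof.
move=> /eqP rankG yG; rewrite /row_free eqn_leq rank_leq_row /=.
rewrite -{1}rankG (ltn_leqif (mxrank_leqif_sup (submx_col_mxr y G))) col_mx_sub.
by rewrite (negbTE yG).
Qed.

End ColMxRowVector.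

Section SemilinearForm.
Variables (F : fieldType) (n : nat).
Variables (form : 'rV[F]_n -> 'rV[F]_n -> F) (s : F -> F).
Hypothesis formD : forall z u v, form z (u + v) = form z u + form z v.
Hypothesis formZ : forall z a u, form z (a *: u) = s a * form z u.
Hypothesis s_eq0 : forall a, s a = 0 -> a = 0.

Definition form_orth k (G : 'M[F]_(k, n)) (x : 'rV[F]_n) :=
  forall z, (z <= G)%MS -> form z x = 0.

Definition form_LCD k (G : 'M[F]_(k, n)) :=
  forall x, (x <= G)%MS -> form_orth G x -> x = 0.

Lemma form0 z : form z 0 = 0.
Proof. by apply: (@addrI _ (form z 0)); rewrite -formD !addr0. Qed.

Section Extension.
Variables (k : nat) (G : 'M[F]_(k, n)) (y : 'rV[F]_n).
Hypotheses (lcdG : form_LCD G) (orth_y : form_orth G y) (fyy : form y y != 0).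

Lemma notin_form_LCD : ~~ (y <= G)%MS.
Proof. by apply: contra fyy => yG; rewrite (lcdG yG orth_y) form0. Qed.

Lemma form_LCD_col_mx : form_LCD (col_mx y G).
Proof.
move=> x /sub_col_mx_rV[a [c [cG ->]]] orth_x.
have c0 : c = 0.
  apply: lcdG => // z zG.
  have := orth_x z (submx_trans zG (submx_col_mxr y G)).
  by rewrite formD formZ orth_y // mulr0 add0r.
have := orth_x y (submx_col_mxl y G); rewrite c0 addr0 formZ => /eqP.
by rewrite mulf_eq0 (negbTE fyy) orbF => /eqP /s_eq0 ->; rewrite scale0r.
Qed.

Lemma col_mx_form_LCD :
  row_free G -> row_free (col_mx y G) /\ form_LCD (col_mx y G).
Proof.
move=> freeG; split; last exact: form_LCD_col_mx.
exact: row_free_col_mx_rV freeG notin_form_LCD.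
Qed.

End Extension.

End SemilinearForm.

Section InnerProducts.
Variables (F : fieldType) (n : nat).
Implicit Types (z u v : 'rV[F]_n) (a : F).

Lemma ipED z u v : ipE z (u + v) = ipE z u + ipE z v.
Proof. by rewrite /ipE -big_split; apply: eq_bigr => i _; rewrite mxE mulrDr. Qed.

Lemma ipEZ z a u : ipE z (a *: u) = a * ipE z u.
Proof.
rewrite /ipE mulr_sumr; apply: eq_bigr => i _.
by rewrite mxE mulrCA.
Qed.

Lemma ipHD (ch2 : 2%N \in [pchar F]) z u v : ipH z (u + v) = ipH z u + ipH z v.
Proof.
rewrite /ipH -big_split; apply: eq_bigr => i _.
by rewrite mxE sqrrD mulrn_pchar // addr0 mulrDr.
Qed.

Lemma ipHZ z a u : ipH z (a *: u) = a ^+ 2 * ipH z u.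
Proof.
rewrite /ipH mulr_sumr; apply: eq_bigr => i _.
by rewrite mxE exprMn mulrCA.
Qed.

End InnerProducts.

Lemma expf_card_pred (F : finFieldType) (x : F) : x ^+ #|F|.-1 = (x != 0)%:R.
Proof.
have q_gt1 := finNzRing_gt1 F.
have [->|x_neq0] := eqVneq x 0.
  by rewrite expr0n; case: #|F| q_gt1 => [|[|q]].
apply: (mulIf x_neq0); rewrite -exprSr prednK ?expf_card ?mul1r //.
exact: ltnW.
Qed.

Lemma natr_wt (F : finFieldType) n (y : 'rV[F]_n) :
  (wt y)%:R = \sum_(i < n) y 0 i ^+ #|F|.-1.
Proof.
rewrite /wt -sum1_card natr_sum [LHS]big_mkcond /=.
by apply: eq_bigr => i _; rewrite expf_card_pred inE; case: (_ != 0).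
Qed.

Lemma ipE_self_F2 n (y : 'rV['F_2]_n) : ipE y y = (wt y)%:R.
Proof.
rewrite natr_wt card_Fp //; apply: eq_bigr => i _.
by have := expf_card (y 0 i); rewrite card_Fp // expr2.
Qed.

Lemma ipE_self_F3 n (y : 'rV['F_3]_n) : ipE y y = (wt y)%:R.
Proof. by rewrite natr_wt card_Fp //; apply: eq_bigr => i _; rewrite -expr2. Qed.

Lemma ipH_self_card4 (F : finFieldType) n (y : 'rV[F]_n) :
  #|F| = 4%N -> ipH y y = (wt y)%:R.
Proof.
by move=> card4; rewrite natr_wt card4; apply: eq_bigr => i _; rewrite -exprS.
Qed.

Theorem theorem3p10 :
  (* (1) binary *)
  (forall (n k : nat) (G : 'M['F_2]_(k, n)) (y : 'rV['F_2]_n),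
     is_gen_matrix G -> LCD_E G -> in_dualE G y ->
     odd (wt y) ->
     is_gen_matrix (col_mx y G) /\ LCD_E (col_mx y G)) /\
  (* (2) ternary *)
  (forall (n k : nat) (G : 'M['F_3]_(k, n)) (y : 'rV['F_3]_n),
     is_gen_matrix G -> LCD_E G -> in_dualE G y ->
     (wt y %% 3 != 0)%N ->
     is_gen_matrix (col_mx y G) /\ LCD_E (col_mx y G)) /\
  (* (3) quaternary, F any field with 4 elements *)
  (forall (F : finFieldType) (n k : nat) (G : 'M[F]_(k, n)) (y : 'rV[F]_n),
     #|F| = 4%N ->
     is_gen_matrix G -> LCD_H G -> in_dualH G y ->
     odd (wt y) ->
     is_gen_matrix (col_mx y G) /\ LCD_H (col_mx y G)).
Proof.
have id_eq0 (F : fieldType) (a : F) : id a = 0 -> a = 0 by [].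
split; [|split].
- move=> n k G y freeG lcdG orth_y odd_wt.
  apply: (col_mx_form_LCD (@ipED _ n) (@ipEZ _ n) (id_eq0 _)) => //.
  by rewrite ipE_self_F2 -(dvdn_pcharf (pchar_Fp _)) // dvdn2 odd_wt.
- move=> n k G y freeG lcdG orth_y wt_mod3.
  apply: (col_mx_form_LCD (@ipED _ n) (@ipEZ _ n) (id_eq0 _)) => //.
  by rewrite ipE_self_F3 -(dvdn_pcharf (pchar_Fp _)).
- move=> F n k G y card4 freeG lcdG orth_y odd_wt.
  have ch2 : 2%N \in [pchar F] by apply: (@card_finPcharP _ _ 2).
  have sqr_eq0 (a : F) : a ^+ 2 = 0 -> a = 0 by move/eqP; rewrite sqrf_eq0 => /eqP.
  apply: (col_mx_form_LCD (@ipHD _ n ch2) (@ipHZ _ n) sqr_eq0) => //.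
  by rewrite ipH_self_card4 // -(dvdn_pcharf ch2) dvdn2 odd_wt.
Qed.
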